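(* Let $B$ be a Banach algebra such that $\bigcap_{\varphi\in\Delta(B)}\ker\varphi=\{0\}$, let $A$ be a Banach subalgebra of $B$, and let $D:A\to B$ be a bounded linear operator. Then the following are equivalent: (i) $D$ is a derivation, i.e. $D(ab)=a\,D(b)+D(a)\,b$ for all $a,b\in A$; (ii) for every $\varphi\in\Delta(B)$, the functional $\varphi\circ D$ is a $(\varphi,\iota)$-point derivation on $A$, where $\iota:A\to B$ is the inclusion map; that is, $\varphi(D(ab))=\varphi(a)\,\varphi(D(b))+\varphi(b)\,\varphi(D(a))$ for all $a,b\in A$.
   Context: $\Delta(B)$ denotes the set of all nonzero multiplicative linear functionals on $B$. The paper calls $B$ semisimple when $\bigcap_{\varphi\in\Delta(B)}\ker\varphi=\{0\}$ (this is the sense used here). For $\varphi\in\Delta(B)$ and a continuous homomorphism $\psi:A\to B$, a bounded linear functional $T$ on $A$ is a $(\varphi,\psi)$-point derivation if $T(ab)=\varphi(\psi(a))T(b)+\varphi(\psi(b))T(a)$ for all $a,b\in A$. *)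

From HB Require Import structures.
From mathcomp Require Import all_boot all_order all_algebra.
From mathcomp Require Import complex.
From mathcomp Require Import all_classical all_reals all_analysis.
Set Implicit Arguments. Unset Strict Implicit. Unset Printing Implicit Defensive.
Import Order.TTheory GRing.Theory Num.Theory ComplexField.
Import numFieldNormedType.Exports.
Local Open Scope classical_set_scope.
Local Open Scope ring_scope.

Definition banach_algebra_mul (R : realType) (B : completeNormedModType R[i])
    (mul : B -> B -> B) : Prop :=
  [/\ (forall x y z, mul x (mul y z) = mul (mul x y) z),
      (forall x y z, mul (x + y) z = mul x z + mul y z),
      (forall x y z, mul x (y + z) = mul x y + mul x z),
      (forall (c : R[i]) x y, mul (c *: x) y = c *: mul x y
                              /\ mul x (c *: y) = c *: mul x y) &
      (forall x y, `|mul x y| <= `|x| * `|y|)].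

Definition banach_subalgebra (R : realType) (B : completeNormedModType R[i])
    (mul : B -> B -> B) (A : set B) : Prop :=
  [/\ A 0,
      (forall (c : R[i]) x y, A x -> A y -> A (c *: x + y)),
      (forall x y, A x -> A y -> A (mul x y)) &
      closed A].

(* Delta(B): nonzero multiplicative linear functionals on B
   (no continuity assumed, as in the paper). *)
Definition character (R : realType) (B : completeNormedModType R[i])
    (mul : B -> B -> B) (phi : B -> R[i]) : Prop :=
  [/\ (forall (c : R[i]) x y, phi (c *: x + y) = c * phi x + phi y),
      (forall x y, phi (mul x y) = phi x * phi y) &
      exists x, phi x != 0].

Definition char_semisimple (R : realType) (B : completeNormedModType R[i])
    (mul : B -> B -> B) : Prop :=
  forall x : B, (forall phi, character mul phi -> phi x = 0) -> x = 0.

Definition bounded_linear_on (R : realType) (V W : normedModType R[i])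
    (A : set V) (T : V -> W) : Prop :=
  (forall (c : R[i]) x y, A x -> A y -> T (c *: x + y) = c *: T x + T y) /\
  (exists M : R[i], forall x, A x -> `|T x| <= M * `|x|).

Definition point_derivation (R : realType) (B : completeNormedModType R[i])
    (mul : B -> B -> B) (A : set B) (phi : B -> R[i]) (psi : B -> B)
    (T : B -> R[i]) : Prop :=
  bounded_linear_on (A : set B) (T : B -> R[i]^o) /\
  (forall a b, A a -> A b ->
     T (mul a b) = phi (psi a) * T b + phi (psi b) * T a).

Definition derivation_on (R : realType) (B : completeNormedModType R[i])
    (mul : B -> B -> B) (A : set B) (D : B -> B) : Prop :=
  forall a b, A a -> A b -> D (mul a b) = mul a (D b) + mul (D a) b.

(* Every character of a Banach algebra satisfies |phi x| <= |x|: otherwise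
   y := x / phi x has |y| < 1 and phi y = 1, and the limit s of the iterates of
   s |-> y + y s (the sum of the powers of y) satisfies s = y + y s, whence
   phi s = 1 + phi s.  Characters are therefore bounded, so phi o D is bounded
   linear, and phi o D is a point derivation at (a, b) exactly when phi kills
   the derivation defect D(ab) - a D(b) - D(a) b.  One direction is immediate;
   for the other, semisimplicity turns "killed by every character" into
   "equal to zero". *)

From HB Require Import structures.
From mathcomp Require Import all_boot all_order all_algebra.
From mathcomp Require Import complex.
From mathcomp Require Import all_classical all_reals all_analysis.
Import Order.TTheory GRing.Theory Num.Theory ComplexField.
Import numFieldNormedType.Exports.
Local Open Scope classical_set_scope.
Local Open Scope complex_scope.
Local Open Scope ring_scope.

Lemma cvgn_geometric_increments {R : realType} {V : completeNormedModType R[i]}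
    (u : V ^nat) (c r : R) :
  0 <= r < 1 -> (forall n, `|u n.+1 - u n| <= (c * r ^+ n)%:C) -> cvgn u.
Proof.
move=> /andP[r_ge0 r_lt1] du.
have c_ge0 : 0 <= c.
  by have := le_trans (normr_ge0 _) (du 0); rewrite expr0 mulr1 ler0c.
have tail n m : `|u (n + m)%N - u n| <= (c / (1 - r) * r ^+ n)%:C.
  rewrite -telescope_sumr ?leq_addr // (le_trans (ler_norm_sum _ _ _)) //.
  rewrite (le_trans (ler_sum _ (fun k _ => du k))) // -rmorph_sum lecR.
  rewrite -mulr_sumr geometric_partial_tail geometric_seriesE ?lt_eqF //=.
  rewrite [leRHS]mulrAC -[leRHS]mulrA; apply: ler_wpM2l => //.
  apply: ler_wpM2r; first by rewrite invr_ge0 subr_ge0 ltW.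
  by rewrite ler_piMr ?exprn_ge0 // gerBl exprn_ge0.
apply/cauchy_cvgP/cauchyP => _ /[dup] /gtr0_real /complex_realP [e ->].
rewrite ltcR => e_gt0.
have : geometric (c / (1 - r)) r @ \oo --> 0.
  by apply: cvg_geometric; rewrite ger0_norm.
move=> /cvgrPdist_lt /(_ _ e_gt0) [N _ tail_lt].
exists (u N), N => // n /= /subnKC <-.
rewrite -ball_normE /ball_ /= distrC (le_lt_trans (tail _ _)) // ltcR.
have := tail_lt N (leqnn N); rewrite sub0r normrN.
exact/le_lt_trans/ler_norm.
Qed.

Section BanachAlgebra.
Variables (R : realType) (B : completeNormedModType R[i]) (mul : B -> B -> B).
Hypothesis mulB : banach_algebra_mul mul.

Lemma mulBr x y z : mul x (y - z) = mul x y - mul x z.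
Proof.
by case: mulB => _ _ mulDr _ _; apply/eqP; rewrite eq_sym subr_eq -mulDr subrK.
Qed.

Lemma ler_norm_mul x y : `|mul x y| <= `|x| * `|y|.
Proof. by case: mulB. Qed.

Lemma continuous_mull x : continuous (mul x).
Proof.
move=> y; apply/cvgrPdist_lt => e e_gt0.
have nx_gt0 : 0 < `|x| + 1 by rewrite ltr_wpDl.
near=> z; rewrite -mulBr (le_lt_trans (ler_norm_mul _ _)) //.
rewrite (@le_lt_trans _ _ ((`|x| + 1) * `|y - z|)) ?ler_wpM2r ?lerDl //.
rewrite -ltr_pdivlMl //.
by near: z; apply: cvgr_dist_lt => //; rewrite mulr_gt0 ?invr_gt0.
Unshelve. all: by end_near. Qed.

Definition derivation_defect (D : B -> B) a b :=
  D (mul a b) - (mul a (D b) + mul (D a) b).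

Section Character.
Variable phi : B -> R[i].
Hypothesis phi_char : character mul phi.

Let phi_scalar : scalar phi. Proof. by case: phi_char. Qed.
HB.instance Definition _ := GRing.isLinear.Build R[i] B R[i] *%R phi phi_scalar.

Lemma character_mul x y : phi (mul x y) = phi x * phi y.
Proof. by case: phi_char. Qed.

Lemma character_neq1 y : `|y| < 1 -> phi y != 1.
Proof.
move=> ny_lt1.
have [r nyE] : exists r, `|y| = r%:C by apply/complex_realP/normr_real.
have r_ge0 : 0 <= r by rewrite -ler0c -nyE.
have r_lt1 : r < 1 by rewrite -ltcR -nyE.
pose f s := y + mul y s; pose u n := iter n f y.
have du n : `|u n.+1 - u n| <= (r ^+ 2 * r ^+ n)%:C.
  elim: n => [|n IH].
    rewrite /= /f [y + _]addrC addrK expr0 mulr1 rmorphXn /= -nyE.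
    exact: ler_norm_mul.
  rewrite /= /f opprD addrACA subrr add0r -mulBr.
  rewrite (le_trans (ler_norm_mul _ _)) //.
  by rewrite nyE [r ^+ n.+1]exprS mulrCA rmorphM ler_wpM2l ?ler0c.
have u_cvg : cvgn u.
  by apply: (cvgn_geometric_increments _ _ _ _ du); rewrite r_ge0.
have u_fixed : limn u = f (limn u).
  apply: cvg_lim => //; rewrite -cvg_shiftS.
  exact: cvgD (cvg_cst y) (continuous_cvg _ (continuous_mull y _) u_cvg).
have := congr1 phi u_fixed; rewrite /f raddfD /= character_mul.
apply: contraPneq => ->; rewrite mul1r -[LHS]add0r => /addIr /eqP.
by rewrite eq_sym oner_eq0.
Qed.

Lemma character_norm_le x : `|phi x| <= `|x|.
Proof.
rewrite real_leNgt ?normr_real //; apply/negP => lt_x_phix.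
have phix_neq0 : phi x != 0 by rewrite -normr_gt0 (le_lt_trans _ lt_x_phix).
have /character_neq1 : `|(phi x)^-1 *: x| < 1.
  by rewrite normrZ normfV ltr_pdivrMl ?normr_gt0 // mulr1.
by rewrite linearZ /= mulVf ?eqxx.
Qed.

Lemma character_derivation_defect D a b :
  phi (derivation_defect D a b) =
  phi (D (mul a b)) - (phi a * phi (D b) + phi b * phi (D a)).
Proof. by rewrite raddfB raddfD /= !character_mul [phi (D a) * _]mulrC. Qed.

Lemma bounded_linear_character_comp (A : set B) D :
  bounded_linear_on A D -> bounded_linear_on A (phi \o D : B -> R[i]^o).
Proof.
case=> DL [M DM]; split => [c x y Ax Ay /=|]; first by rewrite DL // linearP.
by exists M => x Ax /=; rewrite (le_trans (character_norm_le _)) ?DM.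
Qed.

Lemma point_derivation_defectP (A : set B) D : bounded_linear_on A D ->
  point_derivation mul A phi id (phi \o D) <->
  (forall a b, A a -> A b -> phi (derivation_defect D a b) = 0).
Proof.
move=> /bounded_linear_character_comp phiD_bdd.
split=> [[_ phiD_pd] a b Aa Ab | defect0]; last split=> // a b Aa Ab.
  have /= phiD_ab := phiD_pd a b Aa Ab.
  by rewrite character_derivation_defect phiD_ab subrr.
by apply/eqP; rewrite -subr_eq0 -character_derivation_defect defect0.
Qed.

Lemma derivation_point_derivation (A : set B) D :
  bounded_linear_on A D -> derivation_on mul A D ->
  point_derivation mul A phi id (phi \o D).
Proof.
move=> /point_derivation_defectP -> Dder a b Aa Ab.
by rewrite /derivation_defect Dder // subrr raddf0.
Qed.

End Character.

Lemma point_derivations_derivation (A : set B) D :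
  char_semisimple mul -> bounded_linear_on A D ->
  (forall phi, character mul phi -> point_derivation mul A phi id (phi \o D)) ->
  derivation_on mul A D.
Proof.
move=> semisimple D_bdd phiD_pd a b Aa Ab.
apply/eqP; rewrite -subr_eq0 -/(derivation_defect D a b); apply/eqP/semisimple.
move=> phi phi_char; have := phiD_pd phi phi_char.
by move/(@point_derivation_defectP phi phi_char A D D_bdd); apply.
Qed.

End BanachAlgebra.

Theorem theorem2p9 (R : realType) (B : completeNormedModType R[i])
    (mul : B -> B -> B) (A : set B) (D : B -> B) :
  banach_algebra_mul mul ->
  char_semisimple mul ->
  banach_subalgebra mul A ->
  bounded_linear_on A D ->
  derivation_on mul A D <->
  (forall phi : B -> R[i], character mul phi ->
     point_derivation mul A phi id (phi \o D)).
Proof.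
move=> mulB semisimple _ D_bdd; split=> [Dder phi phi_char|].
  exact: derivation_point_derivation.
exact: point_derivations_derivation.
Qed.
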